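(* Let $p$ be a prime, let $V$ be an $n$-dimensional vector space over $GF(p)$, and fix an identification of $V$ with the additive group of $GF(p^n)$. Let $S \leq \mathrm{Aut}(V)$ be the group of all maps $\sigma_t : v \mapsto tv$ for $t \in GF(p^n)^\times$ (multiplication in the field), and let $L \leq \mathrm{Aut}(V)$ be the Galois group of $GF(p^n)$ over $GF(p)$, i.e. the cyclic group of order $n$ generated by the Frobenius map $v \mapsto v^p$. Suppose $K$ is a subgroup of $\mathrm{Aut}(V)$ with $|K| = qp^r$, where $q$ is a prime with $p < q$ and $r \geq 1$, and suppose that a Sylow $q$-subgroup of $K$ acts irreducibly on $V$. Then $K$ is conjugate in $\mathrm{Aut}(V)$ to the group $TH$, where $T \leq S$ has order $q$ and $H \leq L$ has order $p^r$. In particular, $p^r$ divides $n$. *)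

(* V = GF(p^n) viewed as an F_p-vector space, where
   F is a finite field of order p^n. Aut(V) = GL(V) = additive bijections of F
   (over the prime field GF(p), additive = GF(p)-linear). *)
From mathcomp Require Export all_boot all_order all_algebra all_fingroup all_solvable all_field.
Set Implicit Arguments. Unset Strict Implicit. Unset Printing Implicit Defensive.
Import GRing.Theory.

Definition is_linear_aut (F : finFieldType) (s : {perm F}) : Prop :=
  forall x y : F, s (x + y)%R = (s x + s y)%R.

Definition in_S (F : finFieldType) (s : {perm F}) : Prop :=
  exists t : F, t != 0%R /\ forall x : F, s x = (t * x)%R.

Definition in_L (F : finFieldType) (p : nat) (s : {perm F}) : Prop :=
  exists i : nat, forall x : F, s x = (x ^+ (p ^ i))%R.

(* GF(p)-subspaces of V = F: additive subgroups (closure under GF(p)-scalars,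
   i.e. under nat multiples, and under negation follows automatically). *)
Definition Fp_subspace (F : finFieldType) (W : {set F}) : Prop :=
  (0%R \in W) /\ forall x y, x \in W -> y \in W -> (x + y)%R \in W.

Definition acts_irreducibly (F : finFieldType) (Q : {set {perm F}}) : Prop :=
  forall W : {set F}, Fp_subspace W ->
    (forall (g : {perm F}) (w : F), g \in Q -> w \in W -> g w \in W) ->
    W = [set 0%R] \/ W = [set: F].

(* Burnside's p^a q^b theorem makes K solvable. A minimal normal subgroup of K is an
   elementary abelian r-group; it cannot be a p-group, whose nonzero fixed vectors would span a
   proper Q-stable subspace, so it is the Sylow q-subgroup Q, of order q. Comparing |V| with the
   number of fixed points of Q gives q | p^n - 1, and an eigenfunctional of a generator of Q for
   a primitive q-th root of unity, injective by irreducibility, conjugates Q into S. The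
   conjugate of K then normalises an irreducible group of scalings, so its elements are
   semilinear maps v |-> c v^(p^i), i.e. lie in S L. As S is a normal p'-subgroup of S L,
   Sylow's theorem moves a Sylow p-subgroup of that conjugate into L by an element of S, which
   centralises the conjugate of Q. Finally p^r divides |L|, which divides n. *)

From HB Require Import structures.
From mathcomp Require Import all_character.
Import GRing.Theory.
Set Implicit Arguments. Unset Strict Implicit. Unset Printing Implicit Defensive.

Local Open Scope group_scope.
Local Open Scope ring_scope.

Lemma additive0 (V : zmodType) (f : V -> V) : {morph f : x y / x + y} -> f 0 = 0.
Proof. by move=> fD; apply: (addrI (f 0)); rewrite -fD !addr0. Qed.

Lemma card_Sylow_pow (gT : finGroupType) (G P : {group gT}) (p k m : nat) :
  prime p -> ~~ (p %| m)%N -> #|G| = (p ^ k * m)%N -> p.-Sylow(G) P -> #|P| = (p ^ k)%N.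
Proof.
move=> p_pr pm cardG sylP; have m_gt0 : (0 < m)%N by case: m pm {cardG} => //; rewrite dvdn0.
have pk_gt0 : (0 < p ^ k)%N by rewrite expn_gt0 prime_gt0.
rewrite (card_Hall sylP) cardG (partnM _ pk_gt0 m_gt0).
by rewrite part_pnat_id ?pnatX ?pnat_id // part_p'nat ?muln1 // p'natE.
Qed.

Section LinearAutomorphisms.
Variable F : finFieldType.

Definition linaut := [set s : {perm F} | [forall x, forall y, s (x + y) == s x + s y]].

Lemma linautP s : reflect (is_linear_aut s) (s \in linaut).
Proof.
apply: (iffP idP) => [|sD]; rewrite inE.
  by move=> /forallP sD x y; apply/eqP; have /forallP := sD x; apply.
by apply/forallP => x; apply/forallP => y; rewrite sD.
Qed.

Lemma linaut_group_set : group_set linaut.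
Proof.
apply/group_setP; split=> [|s t /linautP sD /linautP tD]; apply/linautP => x y.
  by rewrite !perm1.
by rewrite !permM sD tD.
Qed.
Canonical linaut_group := Group linaut_group_set.

Lemma linaut0 s : s \in linaut -> s 0 = 0.
Proof. by move/linautP/additive0. Qed.

Lemma Fix_subspace (G : {set {perm F}}) : G \subset linaut -> Fp_subspace 'Fix_'P(G).
Proof.
move=> /subsetP Glin; split=> [|x y /afixP xG /afixP yG].
  by apply/afixP => g /Glin/linaut0.
apply/afixP => g gG; move: (xG g gG) (yG g gG); rewrite /= !apermE.
by rewrite (linautP _ (Glin g gG)) => -> ->.
Qed.

Lemma Fix_irreducible (Q G : {group {perm F}}) :
  acts_irreducibly Q -> G \subset linaut -> Q \subset 'N(G) -> G :!=: 1%g ->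
  'Fix_'P(G) = [set 0].
Proof.
move=> irrQ Glin nGQ ntG.
have /actsP QfixG := acts_fix_norm 'P nGQ.
case: (irrQ _ (Fix_subspace Glin)) => [g w Qg Gw | // | FixT].
  by rewrite -(QfixG g Qg) in Gw.
case/eqP: ntG; apply/trivgP/subsetP => g Gg; rewrite inE; apply/eqP/permP => w.
have: w \in 'Fix_'P(G) by rewrite FixT inE.
by move/afixP/(_ g Gg); rewrite /= apermE perm1.
Qed.

Lemma irreducible_cycle_subspace (s : {perm F}) (W : {set F}) :
    acts_irreducibly <[s]> -> Fp_subspace W -> {in W, forall w, s w \in W} ->
  W = [set 0] \/ W = [set: F].
Proof.
move=> irr_s Wsub sW; apply: irr_s => // _ w /cycleP[j ->].
elim: j w => [|j IHj] w Ww; first by rewrite expg0 perm1.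
by rewrite expgSr permM sW ?IHj.
Qed.

Lemma card_Fix_pgroup_mod (r : nat) (G : {group {perm F}}) :
  r.-group G -> #|F| = #|'Fix_'P(G)| %[mod r].
Proof.
move=> rG; rewrite -cardsT (pgroup_fix_mod (to := 'P) rG) ?setTI //.
by apply/actsP => g _ w; rewrite !inE.
Qed.

End LinearAutomorphisms.
Arguments linaut {F}.

Lemma finField_prim_root_exists (F : finFieldType) (q : nat) :
  prime q -> (q %| #|F|.-1)%N -> exists z : F, q.-primitive_root z.
Proof.
move=> q_pr qF; have [|u _ ou] := @Cauchy _ q [set: {unit F}]%G q_pr.
  by rewrite card_finField_unit.
have uq : FinRing.uval u ^+ q = 1.
  by rewrite -FinRing.val_unitX -ou expg_order FinRing.val_unit1.
have [m prim_u /(primeP q_pr).2/pred2P[m1 | <-]] := prim_order_exists (prime_gt0 q_pr) uq;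
  last by exists (FinRing.uval u).
have u1 : u = 1%g by apply: val_inj; rewrite /= -[_ u]expr1 -m1 prim_expr_order.
by move: q_pr; rewrite -ou u1 order1.
Qed.

Lemma sum_expr_root1 (R : idomainType) (n : nat) (y : R) :
  y ^+ n = 1 -> y != 1 -> \sum_(i < n) y ^+ i = 0.
Proof.
move=> yn y1; have /eqP := subrX1 y n; rewrite yn subrr eq_sym mulf_eq0 subr_eq0.
by rewrite (negPf y1) => /eqP.
Qed.

Section EigenProjection.
Variables (R : fieldType) (q : nat) (z : R) (f : R -> R).
Hypotheses (prim_z : q.-primitive_root z) (fD : {morph f : u v / u + v}).
Hypothesis f_q : forall w, iter q f w = w.

(* [q] times the projection of [w] onto the [z ^+ a]-eigenspace of [f]. *)
Definition eigenproj (a : nat) (w : R) := \sum_(j < q) z ^+ (a * (q - j)) * iter j f w.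

Lemma iter_additive k : {morph iter k f : u v / u + v}.
Proof. by elim: k => [|k IHk] u v //=; rewrite IHk fD. Qed.

Lemma eigenprojD a : {morph eigenproj a : u v / u + v}.
Proof.
by move=> u v; rewrite -big_split; apply: eq_bigr => j _; rewrite iter_additive mulrDr.
Qed.

Lemma eigenproj_f a w : eigenproj a (f w) = z ^+ a * eigenproj a w.
Proof.
have zq : z ^+ (a * q) = 1 by rewrite mulnC exprM (prim_expr_order prim_z) expr1n.
rewrite /eigenproj mulr_sumr; case: q prim_z zq f_q => [|m] _ zq fq; first by rewrite !big_ord0.
rewrite big_ord_recr big_ord_recl /= -iterSr fq subSnn muln1 subn0 zq mul1r addrC.
congr (_ + _); apply: eq_bigr => j _; rewrite -iterSr add0n mulrA -exprD -mulnS.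
by rewrite /bump /= add1n subSS subSn // ltnW.
Qed.

Lemma sum_eigenproj w : \sum_(a < q) eigenproj a w = q%:R * w.
Proof.
have zqk k : (z ^+ k) ^+ q = 1 by rewrite exprAC (prim_expr_order prim_z) expr1n.
rewrite /eigenproj exchange_big /=; under eq_bigr do rewrite -mulr_suml.
case: q prim_z zqk => [|m] prim_zm zqk; first by rewrite big_ord0 mul0r.
rewrite big_ord_recl [X in _ + X]big1 ?addr0 => [|i _].
  by under eq_bigr do rewrite subn0 exprM zqk; rewrite sumr_const card_ord.
under eq_bigr do rewrite mulnC exprM; rewrite sum_expr_root1 ?mul0r //.
by rewrite -(prim_order_dvd prim_zm) /= /bump /= add1n subSS gtnNdvd ?subn_gt0 ?ltnS ?leq_subr.
Qed.

Lemma eigenproj_neq0 w : w != 0 -> exists a, eigenproj a w != 0.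
Proof.
move=> w0; have : \sum_(a < q) eigenproj a w != 0.
  by rewrite sum_eigenproj mulf_neq0 ?(prim_root_dvd_eq0 prim_z).
case: (pickP [pred a : 'I_q | eigenproj a w != 0]) => [a ha _ | eig0]; first by exists a.
by rewrite big1 ?eqxx // => a _; apply/eqP/negbFE/eig0.
Qed.
End EigenProjection.

Lemma ring_morph_frobenius (F : finFieldType) (p : nat) (tau : F -> F) :
    p \in [pchar F] -> {morph tau : x y / x + y} -> {morph tau : x y / x * y} ->
  tau 1 = 1 -> exists i, forall x, tau x = x ^+ (p ^ i).
Proof.
move=> pchF tauD tauM tau1; pose L := pPrimeCharType pchF; pose f : L -> L := tau.
have fA : zmod_morphism f.
  by move=> x y; rewrite /f; have := tauD (x - y) y; rewrite subrK => ->; rewrite addrK.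
have tau_nat k : tau k%:R = k%:R.
  by elim: k => [|k IHk]; rewrite ?additive0 // !mulrS tauD tau1 IHk.
have fZ : scalable f.
  by move=> a x; change (tau ((a : nat)%:R * x) = (a : nat)%:R * tau x); rewrite tauM tau_nat.
pose fL : {linear L -> L} :=
  HB.pack f (GRing.isZmodMorphism.Build _ _ f fA) (GRing.isScalable.Build _ _ _ _ f fZ).
have /kAut_to_gal[beta galLbeta Dbeta]: kAut 1 {:L} (linfun fL).
  rewrite kAutfE; apply/kHomP_tmp; split=> [x /vlineP[a ->] | x y _ _]; rewrite !lfunE //=.
  by change (fL (a *: 1) = a *: 1); rewrite linearZ; congr (_ *: _); exact: tau1.
have [alpha /eqP gen Dalpha] := finField_galois_generator (sub1v (fullv : {vspace L})).
have /cycleP[i beta_i] : beta \in <[alpha]>%g by rewrite -gen.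
exists i => x; have -> : tau x = linfun fL x by rewrite lfunE.
rewrite Dbeta ?memvf // {}beta_i; elim: i x => [|i IHi] x; first by rewrite expg0 gal_id expn0 expr1.
rewrite expgSr galM ?memvf // IHi Dalpha ?memvf // dimv1 card_Fp ?(pcharf_prime pchF) //.
by rewrite expn1 expnSr exprM.
Qed.

Section Semilinear.
Variable F : finFieldType.

Definition scalings := [set s : {perm F} | [exists t, [forall y, s y == t * y]]].

Lemma scalingsP (s : {perm F}) : reflect (exists t, forall y, s y = t * y) (s \in scalings).
Proof.
rewrite inE; apply: (iffP existsP) => [[t /forallP st]|[t st]]; exists t.
  by move=> y; apply/eqP.
by apply/forallP => y; rewrite st.
Qed.

Lemma scalings_group_set : group_set scalings.
Proof.
apply/group_setP; split=> [|s1 s2 /scalingsP[t1 st1] /scalingsP[t2 st2]]; apply/scalingsP.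
  by exists 1 => y; rewrite perm1 mul1r.
by exists (t2 * t1) => y; rewrite permM st1 st2 mulrA.
Qed.
Canonical scalings_group := Group scalings_group_set.

Lemma scalings_abelian : abelian scalings.
Proof.
apply/centsP => s1 /scalingsP[t1 st1] s2 /scalingsP[t2 st2]; apply/permP => y.
by rewrite !permM st1 st2 st1 st2 mulrCA.
Qed.

Lemma scalings_linaut : scalings \subset linaut.
Proof. by apply/subsetP => s /scalingsP[t st]; apply/linautP => x y; rewrite !st mulrDr. Qed.

Lemma scalings_in_S s : s \in scalings -> in_S s.
Proof.
move=> sS; have /scalingsP[t st] := sS; exists t; split=> //; apply/eqP => t0.
have /perm_inj/eqP : s 1 = s 0 by rewrite st t0 mul0r linaut0 ?(subsetP scalings_linaut).
by rewrite oner_eq0.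
Qed.

Variables (p : nat) (pchF : p \in [pchar F]).

Definition frob : {perm F} := perm (fmorph_inj (pFrobenius_aut pchF)).

Lemma frobE y : frob y = y ^+ p.
Proof. by rewrite permE /= pFrobenius_autE. Qed.

Lemma frobX i y : (frob ^+ i)%g y = y ^+ (p ^ i).
Proof.
elim: i y => [|i IHi] y; first by rewrite expg0 perm1 expn0 expr1.
by rewrite expgSr permM IHi frobE expnSr exprM.
Qed.

Lemma frob_in_L s : s \in <[frob]> -> in_L p s.
Proof. by case/cycleP => i ->; exists i; apply: frobX. Qed.

Lemma frob_order_dvd n : #|F| = (p ^ n)%N -> (#[frob] %| n)%N.
Proof.
by move=> cardF; rewrite order_dvdn; apply/eqP/permP => y; rewrite frobX -cardF expf_card perm1.
Qed.

Lemma frob_norm_scalings : <[frob]> \subset 'N(scalings).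
Proof.
rewrite cycle_subG inE; apply/subsetP => _ /imsetP[s /scalingsP[t st] ->].
apply/scalingsP; exists (t ^+ p) => y.
by rewrite /conjg !permM st frobE exprMn; congr (_ * _); rewrite -frobE permKV.
Qed.

Lemma frob_scalings_TI : <[frob]> :&: scalings = 1%g.
Proof.
apply/trivgP/subsetP => s /setIP[/cycleP[i ->] /scalingsP[t st]]; rewrite inE.
have t1 : t = 1 by rewrite -[t]mulr1 -st frobX expr1n.
by apply/eqP/permP => y; rewrite st t1 mul1r perm1.
Qed.

Lemma p'group_scalings : p^'.-group scalings.
Proof.
have p_pr := pcharf_prime pchF; rewrite /pgroup p'natE //; apply/negP.
case/(Cauchy p_pr) => s sS os; have /scalingsP[t st] := sS.
have sX k y : (s ^+ k)%g y = t ^+ k * y.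
  elim: k y => [|k IHk] y; first by rewrite expg0 perm1 expr0 mul1r.
  by rewrite expgSr permM IHk st mulrA -exprS.
have t1 : t = 1.
  apply: (@perm_inj _ frob); rewrite !frobE expr1n.
  by rewrite -[_ ^+ p]mulr1 -sX -os expg_order perm1.
suff s1 : s = 1%g by move: (prime_gt1 p_pr); rewrite -os s1 order1.
by apply/permP => y; rewrite st t1 mul1r perm1.
Qed.

Lemma norm_irreducible_scalings_semilinear (G T : {group {perm F}}) :
    G \subset linaut -> T \subset scalings -> acts_irreducibly T -> G \subset 'N(T) ->
  G \subset (<[frob]> * scalings)%g.
Proof.
move=> /subsetP Glin /subsetP sTS irrT /subsetP nTG; apply/subsetP => k Gk.
have /linautP kD := Glin k Gk; have nTk := nTG k Gk.
have k_scal h : h \in T -> exists lam mu, (forall y, h y = lam * y) /\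
    forall y, k (lam * y) = mu * k y.
  move=> Th; have /scalingsP[lam hlam] := sTS h Th.
  have /scalingsP[mu hmu] : (h ^ k)%g \in scalings by rewrite sTS ?memJ_norm.
  by exists lam, mu; split=> // y; rewrite -hmu /conjg !permM permK hlam.
have k0 := additive0 kD; pose c := k 1; pose tau y := k y / c.
have c0 : c != 0.
  by apply: contra_neq (@oner_neq0 F) => c0; apply: (@perm_inj _ k); rewrite k0.
have tauD : {morph tau : x y / x + y} by move=> x y; rewrite /tau kD mulrDl.
have tau1 : tau 1 = 1 by rewrite /tau divff.
pose B := [set a | [forall b, k (a * b) == tau a * k b]].
have BP a : reflect (forall b, k (a * b) = tau a * k b) (a \in B).
  by rewrite inE; apply: (iffP forallP) => aB b; apply/eqP.
(* [tau] is multiplicative: the [a] with [k (a * b) = tau a * k b] form a [T]-stable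
   subspace containing 1. *)
have BT : B = [set: F].
  case: (irrT B) => [||B0|//].
  - split=> [|a b /BP aB /BP bB]; apply/BP => b'.
      by rewrite mul0r k0 /tau k0 !mul0r.
    by rewrite mulrDl kD aB bB tauD mulrDl.
  - move=> h a Th /BP aB; have [lam [mu [hlam k_lam]]] := k_scal h Th.
    by apply/BP => b; rewrite hlam -mulrA !k_lam aB /tau k_lam !mulrA.
  - have : (1 : F) \in B by apply/BP => b; rewrite mul1r tau1 mul1r.
    by rewrite B0 inE oner_eq0.
have tauM : {morph tau : x y / x * y}.
  move=> x y; have /BP xB : x \in B by rewrite BT inE.
  by rewrite /tau xB mulrA.
have [i tauE] := ring_morph_frobenius pchF tauD tauM tau1.
rewrite -(mulKVg (frob ^+ i)%g k); apply: mem_mulg; first exact: mem_cycle.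
apply/scalingsP; exists c => y; rewrite permM.
by rewrite -[X in k X]mulr1 (BP _ _) ?BT ?inE // tauE -frobX permKV mulrC.
Qed.

Lemma pgroup_semilinear_conj (P : {group {perm F}}) :
    P \subset (<[frob]> * scalings)%g -> p.-group P ->
  exists2 s, s \in scalings & P :^ s \subset <[frob]>.
Proof.
move=> sPLS pP; have p_pr := pcharf_prime pchF; have nSL := frob_norm_scalings.
set G := (scalings <*> <[frob]>)%G.
have [Lp sylLp] := Sylow_exists p <[frob]>.
have sylLpG : p.-Sylow(G) Lp.
  rewrite pHallE (subset_trans (pHall_sub sylLp) (joing_subr _ _)) (card_Hall sylLp) /=.
  rewrite norm_joinEr // TI_cardMg ?partnM // 1?setIC ?frob_scalings_TI //.
  by rewrite (part_p'nat (p'group_scalings)) mul1n.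
have sPG : P \subset G by rewrite /= norm_joinEr // -(normC nSL).
have [y] := Sylow_Jsub sylLpG sPG pP.
rewrite /= norm_joinEr // => /mulsgP[s l sS lL ->]; rewrite conjsgM sub_conjg => sPLp.
exists s => //; apply: subset_trans sPLp _.
by rewrite -(conjGid (groupVr lL)) conjSg (pHall_sub sylLp).
Qed.

Lemma semilinear_conj_mul_frob (G T : {group {perm F}}) (r : nat) :
    G \subset (<[frob]> * scalings)%g -> T \subset scalings -> T <| G ->
    ~~ (p %| #|T|)%N -> #|G| = (#|T| * p ^ r)%N ->
  exists2 s, s \in scalings & exists2 H : {group {perm F}},
    H \subset <[frob]> /\ #|H| = (p ^ r)%N & G :^ s = (T * H)%g.
Proof.
move=> sGLS sTS nTG pT cardG; have p_pr := pcharf_prime pchF.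
have [P sylP] := Sylow_exists p G.
have cardP : #|P| = (p ^ r)%N.
  by apply: (card_Sylow_pow (m := #|T|)) sylP; rewrite // cardG mulnC.
have defG : G :=: (T * P)%g.
  apply/eqP; rewrite eq_sym eqEcard mul_subG ?(normal_sub nTG) ?(pHall_sub sylP) //=.
  rewrite TI_cardMg ?cardG ?cardP // coprime_TIg // cardP coprimeXr //.
  by rewrite coprime_sym prime_coprime.
have [s sS sPsL] := pgroup_semilinear_conj (subset_trans (pHall_sub sylP) sGLS) (pHall_pgroup sylP).
exists s => //; exists (P :^ s)%G; first by rewrite cardJg.
have cTs : s \in 'C(T) by apply: subsetP (centS sTS) _ (subsetP scalings_abelian _ sS).
by rewrite defG conjsMg (normP (subsetP (cent_sub T) _ cTs)).
Qed.

End Semilinear.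
Arguments scalings {F}.

Section IrreducibleSubgroups.
Variable F : finFieldType.
Implicit Types (Q : {group {perm F}}) (g x : {perm F}).

Lemma irreducible_conj Q g : g \in linaut -> acts_irreducibly Q -> acts_irreducibly (Q :^ g).
Proof.
move=> /linautP gD irrQ W [W0 WD] QgW.
have [||W'0|W'T] := irrQ [set w | g w \in W].
- by split=> [|u v]; rewrite !inE ?additive0 // gD; apply: WD.
- move=> h w Qh; rewrite !inE => gwW.
  have Qgh : (h ^ g)%g \in Q :^ g by rewrite memJ_conjg.
  by have := QgW _ _ Qgh gwW; rewrite /conjg !permM permK.
- left; apply/setP => w; rewrite inE; apply/idP/eqP => [Ww | ->] //.
  have : g^-1%g w \in [set w | g w \in W] by rewrite inE permKV.
  by rewrite W'0 inE => /eqP/(canRL (permKV g)); rewrite additive0.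
- right; apply/setP => w; rewrite inE.
  have : g^-1%g w \in [set w | g w \in W] by rewrite W'T inE.
  by rewrite inE permKV.
Qed.

Lemma intertwiner_inj x (psi : F -> F) (lam : F) :
    acts_irreducibly <[x]> -> {morph psi : u v / u + v} ->
    (forall w, psi (x w) = lam * psi w) -> psi 1 != 0 ->
  injective psi.
Proof.
move=> irr_x psiD psix psi1; have psi0 := additive0 psiD.
have [||ker0|kerT] := irreducible_cycle_subspace irr_x (W := [set w | psi w == 0]).
- by split=> [|u v]; rewrite !inE ?psi0 // psiD => /eqP-> /eqP->; rewrite addr0.
- by move=> w; rewrite !inE psix => /eqP->; rewrite mulr0.
- move=> u v psi_uv; apply/eqP; rewrite -subr_eq0 -in_set1 -ker0 inE.
  by apply/eqP/(@addIr _ (psi v)); rewrite -psiD subrK add0r.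
- by have := in_setT (1 : F); rewrite -kerT inE (negPf psi1).
Qed.

Lemma irreducible_prime_conj_scalings Q :
    Q \subset linaut -> acts_irreducibly Q -> prime #|Q| ->
  exists2 g, g \in linaut & Q :^ g \subset scalings.
Proof.
move=> Qlin irrQ q_pr; have [x defQ] := cyclicP (prime_cyclic q_pr).
rewrite defQ -orderE in Qlin irrQ q_pr *.
have xD : is_linear_aut x by apply/linautP; rewrite -cycle_subG.
have qF : (#[x] %| #|F|.-1)%N.
  have ntx : <[x]> :!=: 1%g by rewrite -cardG_gt1 -orderE prime_gt1.
  have qx : #[x].-group <[x]> by rewrite /pgroup -orderE pnat_id.
  have := card_Fix_pgroup_mod qx; rewrite (Fix_irreducible irrQ) ?normG //.
  by rewrite cards1 => /eqP; rewrite eqn_mod_dvd ?subn1 // ltnW ?finNzRing_gt1.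
have [z prim_z] := finField_prim_root_exists q_pr qF.
have x_q w : iter #[x] x w = w by rewrite -permX expg_order perm1.
have [a psi1] := eigenproj_neq0 x prim_z (oner_neq0 F).
have psi_inj := intertwiner_inj irrQ (eigenprojD _ _ xD a) (eigenproj_f prim_z x_q a) psi1.
exists (perm psi_inj); first by apply/linautP => u v; rewrite !permE eigenprojD.
rewrite -cycleJ cycle_subG; apply/scalingsP; exists (z ^+ a) => y.
by rewrite /conjg !permM [perm _ (x _)]permE eigenproj_f // -permE permKV.
Qed.

End IrreducibleSubgroups.

Lemma irreducible_Sylow_normal (F : finFieldType) (p q r : nat) (K Q : {group {perm F}}) :
    prime p -> prime q -> p != q -> (p %| #|F|)%N -> K \subset linaut ->
    #|K| = (q * p ^ r)%N -> q.-Sylow(K) Q -> #|Q| = q -> acts_irreducibly Q ->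
  Q <| K.
Proof.
move=> p_pr q_pr pq pF Klin cardK sylQ cardQ irrQ.
have solK : solvable K.
  apply: Burnside_p_a_q_b; rewrite cardK (@leq_trans (size [:: p; q])) //.
  apply: uniq_leq_size (primes_uniq _) _ => t; rewrite mem_primes => /and3P[t_pr _].
  rewrite Euclid_dvdM // Euclid_dvdX // !dvdn_prime2 //.
  by case/orP=> [|/andP[]] /eqP->; rewrite !inE eqxx ?orbT.
have ntK : K :!=: 1%g.
  by rewrite -cardG_gt1 cardK (leq_trans (prime_gt1 q_pr)) // leq_pmulr // expn_gt0 prime_gt0.
have [M [sMK nMK ntM /is_abelemP[t t_pr /abelem_pgroup tM]]] :=
  solvable_norm_abelem solK (normal_refl K) ntK.
have [_ tM_dv _] := pgroup_pdiv tM ntM.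
have : (t %| q * p ^ r)%N by rewrite -cardK (dvdn_trans tM_dv) ?cardSg.
rewrite Euclid_dvdM // Euclid_dvdX // !dvdn_prime2 // => /orP[/eqP tq | /andP[/eqP tp _]].
  have sMQ : M \subset Q by rewrite (normal_sub_max_pgroup (Hall_max sylQ)) // -tq.
  suff -> : Q :=: M by [].
  by apply/eqP; rewrite eq_sym eqEcard sMQ cardQ -tq dvdn_leq.
have := card_Fix_pgroup_mod tM; rewrite (Fix_irreducible irrQ) ?cards1 ?(subset_trans sMK) //.
  by rewrite tp (eqP pF) modn_small ?prime_gt1.
exact: subset_trans (pHall_sub sylQ) (normal_norm nMK).
Qed.

Local Close Scope ring_scope.
Local Close Scope group_scope.

Theorem proposition11 (F : finFieldType) (p n q r : nat)
  (hp : prime p) (hcard : #|F| = p ^ n)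
  (K : {group {perm F}})
  (hK : forall s, s \in K -> is_linear_aut s)
  (hq : prime q) (hpq : p < q) (hr : 0 < r)
  (hKcard : #|K| = q * p ^ r)
  (hirr : exists2 Q : {group {perm F}}, Q \in ('Syl_q(K))%g & acts_irreducibly Q) :
  (exists g : {perm F}, is_linear_aut g /\
     exists T H : {group {perm F}},
       [/\ (forall s, s \in T -> in_S s), #|T| = q,
           (forall s, s \in H -> in_L p s), #|H| = p ^ r
         & (K :^ g)%g = (T * H)%g])
  /\ p ^ r %| n.
Proof.
have pch := card_finPcharP hcard hp; have pq : p != q by rewrite neq_ltn hpq.
have pF : (p %| #|F|)%N.
  case: n hcard => [cardF | k ->]; last by rewrite dvdn_exp.
  by have := finNzRing_gt1 F; rewrite cardF.
have Klin : K \subset linaut by apply/subsetP => s /hK/linautP.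
case: hirr => Q; rewrite inE => sylQ irrQ.
have cardQ : #|Q| = q.
  apply: (card_Sylow_pow (k := 1) (m := p ^ r)) sylQ; rewrite ?expn1 //.
  by rewrite Euclid_dvdX // dvdn_prime2 // eq_sym (negPf pq).
have nQK := irreducible_Sylow_normal hp hq pq pF Klin hKcard sylQ cardQ irrQ.
have [g gL sQgS] := irreducible_prime_conj_scalings (subset_trans (normal_sub nQK) Klin) irrQ
  (etrans (congr1 prime cardQ) hq).
have KgL : (K :^ g \subset linaut)%g by rewrite -(conjGid gL) conjSg.
have nQKg : (Q :^ g <| K :^ g)%g by rewrite normalJ.
have sKgSL := norm_irreducible_scalings_semilinear pch KgL sQgS (irreducible_conj gL irrQ)
  (normal_norm nQKg).
have pQg : ~~ (p %| #|(Q :^ g)%g|) by rewrite cardJg cardQ dvdn_prime2.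
have cardKg : #|(K :^ g)%g| = #|(Q :^ g)%g| * p ^ r by rewrite !cardJg cardQ.
have [s sS [H [sHL cardH] defKgs]] := semilinear_conj_mul_frob sKgSL sQgS nQKg pQg cardKg.
split; last by rewrite -cardH (dvdn_trans (cardSg sHL)) // -orderE frob_order_dvd.
have gsL : (g * s)%g \in linaut by apply: groupM; [exact: gL | exact: (subsetP (scalings_linaut F))].
exists (g * s)%g; split; first exact/linautP.
exists (Q :^ g)%G, H; split=> //; first by move=> t /(subsetP sQgS)/scalings_in_S.
- by rewrite cardJg.
- by move=> h /(subsetP sHL)/frob_in_L.
- by rewrite conjsgM defKgs.
Qed.
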